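(* If $\mathcal{N}$ is a sound, acyclic, weakly non-deterministic negotiation, then its restriction $\mathcal{N}_D$ to its deterministic processes is sound.
   Context: A negotiation is a tuple $\mathcal{N}=(\mathit{Proc},N,\mathit{dom},R,\delta)$ where $\mathit{Proc}$ is a finite set of processes, $N$ is a finite set of nodes, $\mathit{dom}:N\to 2^{\mathit{Proc}}\setminus\{\emptyset\}$, there are two distinguished nodes $n_{\mathit{init}},n_{\mathit{fin}}$ with $\mathit{dom}(n_{\mathit{init}})=\mathit{dom}(n_{\mathit{fin}})=\mathit{Proc}$, $R$ is a set of results, each node $n$ has a set $\mathit{out}(n)\subseteq R$ of results (nonempty for $n\neq n_{\mathit{fin}}$), and $\delta(n,a,p)\subseteq N$ is defined and nonempty exactly when $a\in\mathit{out}(n)$ and $p\in\mathit{dom}(n)$, with $p\in\mathit{dom}(n')$ for all $n'\in\delta(n,a,p)$. A configuration is a map $C$ assigning to each process a nonempty set of nodes; $C_{\mathit{init}}(p)=\{n_{\mathit{init}}\}$, $C_{\mathit{fin}}(p)=\{n_{\mathit{fin}}\}$. A node $n$ is enabled in $C$ if $n\in C(p)$ for all $p\in\mathit{dom}(n)$. If $n$ is enabled and $a\in\mathit{out}(n)$ then $C\xrightarrow{(n,a)}C'$ with $C'(p)=\delta(n,a,p)$ for $p\in\mathit{dom}(n)$, $C'(p)=C(p)$ otherwise. A run is a sequence of such steps; $\mathcal{N}$ is sound if every finite run from $C_{\mathit{init}}$ can be extended to a finite run ending in $C_{\mathit{fin}}$. The graph of $\mathcal{N}$ has vertex set $N$ and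 edges $n\to n'$ whenever $n'\in\delta(n,a,p)$ for some $a,p$; $\mathcal{N}$ is acyclic if this graph is. A process $p$ is deterministic if $\delta(n,a,p)$ is a singleton for all $n$ with $p\in\mathit{dom}(n)$ and $a\in\mathit{out}(n)$; $\mathcal{N}$ is weakly non-deterministic if every node has a deterministic process in its domain. The restriction of $\mathcal{N}$ to $\mathit{Proc}'\subseteq\mathit{Proc}$ is the negotiation $(\mathit{Proc}',N',\mathit{dom}',R,\delta')$ with $N'=\{n\in N:\mathit{dom}(n)\cap\mathit{Proc}'\neq\emptyset\}$, $\mathit{dom}'(n)=\mathit{dom}(n)\cap\mathit{Proc}'$, $\delta'(n,r,p)=\delta(n,r,p)\cap N'$; $\mathcal{N}_D$ is the restriction to the set of deterministic processes. *)

From mathcomp Require Import all_boot.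
From Stdlib Require Import Relation_Operators.
Set Implicit Arguments. Unset Strict Implicit. Unset Printing Implicit Defensive.

Section Negotiations.
Variables (P N R : finType).

Record negotiation := Negotiation {
  procs : {set P};
  nodes : {set N};
  dom : N -> {set P};
  ninit : N;
  nfin : N;
  out : N -> {set R};
  delta : N -> R -> P -> {set N}  (* meaningful only when n \in nodes, a \in out n, p \in dom n *)
}.

Definition wf_neg (G : negotiation) : Prop :=
  ninit G \in nodes G /\ nfin G \in nodes G /\
  dom G (ninit G) = procs G /\ dom G (nfin G) = procs G /\
  (forall n, n \in nodes G -> dom G n != set0 /\ dom G n \subset procs G) /\
  (forall n, n \in nodes G -> n != nfin G -> out G n != set0) /\
      (forall n a p, n \in nodes G -> a \in out G n -> p \in dom G n ->
         [/\ delta G n a p != set0, delta G n a p \subset nodes G &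
             forall n', n' \in delta G n a p -> p \in dom G n']).

Definition config := {ffun P -> {set N}}.

Definition C_init (G : negotiation) : config :=
  [ffun p => if p \in procs G then [set ninit G] else set0].
Definition C_fin (G : negotiation) : config :=
  [ffun p => if p \in procs G then [set nfin G] else set0].

Definition enabled (G : negotiation) (C : config) (n : N) : bool :=
  (n \in nodes G) && [forall p in dom G n, n \in C p].

Definition step (G : negotiation) (C C' : config) : Prop :=
  exists n a, [/\ enabled G C n, a \in out G n &
    C' = [ffun p => if p \in dom G n then delta G n a p else C p]].

Definition reachable (G : negotiation) : config -> config -> Prop :=
  clos_refl_trans config (step G).

Definition sound (G : negotiation) : Prop :=
  forall C, reachable G (C_init G) C -> reachable G C (C_fin G).

Definition edge (G : negotiation) : rel N :=
  fun n n' => (n \in nodes G) &&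
    [exists a in out G n, exists p in dom G n, n' \in delta G n a p].

Definition acyclic (G : negotiation) : Prop :=
  forall n n', edge G n n' -> ~~ connect (edge G) n' n.

Definition deterministic (G : negotiation) (p : P) : bool :=
  (p \in procs G) &&
  [forall n in nodes G, (p \in dom G n) ==>
     [forall a in out G n, #|delta G n a p| == 1]].

Definition weakly_nondet (G : negotiation) : Prop :=
  forall n, n \in nodes G -> exists2 p, p \in dom G n & deterministic G p.

Definition restrict (G : negotiation) (Q : {set P}) : negotiation :=
  let N' := [set n in nodes G | dom G n :&: Q != set0] in
  {| procs := Q;
     nodes := N';
     dom := fun n => dom G n :&: Q;
     ninit := ninit G;
     nfin := nfin G;
     out := out G;
     delta := fun n a p => delta G n a p :&: N' |}.

Definition det_procs (G : negotiation) : {set P} :=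
  [set p | deterministic G p].

Definition restrict_det (G : negotiation) : negotiation :=
  restrict G (det_procs G).

End Negotiations.

(* Let Q be a set of deterministic processes meeting the domain of every node
   (for N_D, Q is the set of all deterministic processes).  In the restriction
   to Q every process of Q always sits at a single node, so two distinct
   enabled nodes share no process and their steps commute.  A strategy picks
   one result per node.  Projecting onto Q turns every step of N into a step
   of the restriction, so soundness of N gives, from the initial configuration,
   a run of the restriction to the final one following any given strategy; it
   terminates because every step moves processes of Q to single successor
   nodes and so decreases the total height of the occupied nodes.  The
   property "for every strategy, the final configuration is reachable
   following it" then propagates along a step (n, a) of the restriction: a run
   following a strategy that picks a at n must fire n, this step commutes to
   the front, and afterwards n is never fired again since the graph is
   acyclic, so the rest of the run follows the original strategy. *)

From mathcomp Require Import all_boot.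
From Stdlib Require Import Relation_Operators Operators_Properties.

Set Implicit Arguments.
Unset Strict Implicit.
Unset Printing Implicit Defensive.

Lemma clos_rt_sub_preorder (T : Type) (S Q : T -> T -> Prop) :
  (forall x, Q x x) -> (forall x y z, Q x y -> Q y z -> Q x z) ->
  (forall x y, S x y -> Q x y) ->
  forall x y, clos_refl_trans T S x y -> Q x y.
Proof.
move=> Qrefl Qtrans SQ x y.
by elim=> [u v /SQ | // | u v w _ Quv _ Qvw]; last exact: Qtrans Quv Qvw.
Qed.

Lemma clos_rt_first_step (T : Type) (S : T -> T -> Prop) x y :
  clos_refl_trans T S x y -> x = y \/ exists z, S x z.
Proof. by elim/clos_refl_trans_ind_right => [|u v Suv _ _]; [left | right; exists v]. Qed.

Section Runs.
Variables (P N R : finType) (H : negotiation P N R).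
Implicit Types (C X Y : config P N) (e : rel N) (f : N -> option R).

Definition fire C n a : config P N :=
  [ffun p => if p \in dom H n then delta H n a p else C p].

Definition step_by f C C' : Prop :=
  exists n a, [/\ enabled H C n, f n = Some a, a \in out H n & C' = fire C n a].

Definition reachable_by f : config P N -> config P N -> Prop :=
  clos_refl_trans _ (step_by f).

Lemma step_by_step f C C' : step_by f C C' -> step H C C'.
Proof. by case=> n [a [nC _ aout ->]]; exists n, a. Qed.

Lemma reachable_by_reachable f C C' : reachable_by f C C' -> reachable H C C'.
Proof.
apply: clos_rt_sub_preorder => [X | X Y Z | X Y /step_by_step].
- exact: rt_refl.
- exact: rt_trans.
- exact: rt_step.
Qed.

Lemma enabled_fire C m n a :
  [disjoint dom H m & dom H n] -> enabled H C n -> enabled H (fire C m a) n.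
Proof.
move=> dis /andP[nH /forall_inP nC]; rewrite /enabled nH.
apply/forall_inP => p pn; rewrite ffunE; case: ifP => [pm | _]; last exact: nC.
by rewrite (disjointFr dis pm) in pn.
Qed.

Lemma fire_comm C m n a b : [disjoint dom H m & dom H n] ->
  fire (fire C m a) n b = fire (fire C n b) m a.
Proof.
move=> dis; apply/ffunP => p; rewrite !ffunE.
by case: ifP => pn; case: ifP => pm //; rewrite (disjointFr dis pm) in pn.
Qed.

Lemma edge_delta n a p x : n \in nodes H -> a \in out H n -> p \in dom H n ->
  x \in delta H n a p -> edge H n x.
Proof.
move=> nH aout pn xd; rewrite /edge nH.
by apply/exists_inP; exists a => //; apply/exists_inP; exists p.
Qed.

Definition descends e C C' :=
  forall p x, x \in C' p -> exists2 y, y \in C p & connect e y x.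

Lemma descends_refl e C : descends e C C.
Proof. by move=> p x xC; exists x. Qed.

Lemma descends_trans e C1 C2 C3 :
  descends e C1 C2 -> descends e C2 C3 -> descends e C1 C3.
Proof.
move=> d12 d23 p x /d23[y /d12[z zC1 zy] yx].
by exists z => //; apply: connect_trans zy yx.
Qed.

Lemma descends_sub e e' C C' :
  subrel e e' -> descends e C C' -> descends e' C C'.
Proof.
move=> ee' dC p x /dC[y yC yx]; exists y => //.
exact: connect_sub (fun u v uv => connect1 (ee' u v uv)) _ _ yx.
Qed.

Lemma step_descends C C' : step H C C' -> descends (edge H) C C'.
Proof.
case=> n [a [/andP[nH /forall_inP nC] aout ->]] p x; rewrite ffunE.
case: ifP => [pn xd | _ xC]; last by exists x.
by exists n; [exact: nC | apply/connect1/(edge_delta nH aout pn xd)].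
Qed.

Lemma reachable_descends C C' : reachable H C C' -> descends (edge H) C C'.
Proof.
apply: clos_rt_sub_preorder; [exact: descends_refl | exact: descends_trans |].
exact: step_descends.
Qed.

End Runs.

Section SoundAcyclic.
Variables (P N R : finType) (G : negotiation P N R).
Hypothesis acyclicG : acyclic G.

Definition height n := #|[set x | connect (edge G) n x]|.

Lemma height_edge n x : edge G n x -> height x < height n.
Proof.
move=> nx; apply/proper_card/properP; split.
- by apply/subsetP => y; rewrite !inE; apply: connect_trans (connect1 nx).
- by exists n; rewrite !inE ?connect0 ?acyclicG.
Qed.

Lemma out_nfin : wf_neg G -> sound G -> out G (nfin G) = set0.
Proof.
move=> [_ [finG [_ [dom_fin [dom_nodes _]]]]] soundG.
apply/setP => b; rewrite inE; apply/negP => bout.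
have fin_fire : step G (C_fin G) (fire G (C_fin G) (nfin G) b).
  exists (nfin G), b; split => //; rewrite /enabled finG.
  by apply/forall_inP => p; rewrite dom_fin => p_procs; rewrite ffunE p_procs set11.
have /reachable_descends descends_fin :
    reachable G (fire G (C_fin G) (nfin G) b) (C_fin G).
  by apply/soundG/(rt_trans _ _ _ _ _ (soundG _ (rt_refl _ _ _)))/rt_step.
have [/set0Pn[p pfin] _] := dom_nodes _ finG.
have [|y] := descends_fin p (nfin G); first by rewrite ffunE -dom_fin pfin set11.
rewrite ffunE pfin => yd.
by rewrite (negbTE (acyclicG (edge_delta finG bout pfin yd))).
Qed.

End SoundAcyclic.

Section DeterministicRestriction.
Variables (P N R : finType) (G : negotiation P N R) (Q : {set P}).
Hypotheses (wfG : wf_neg G) (soundG : sound G) (acyclicG : acyclic G).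
Hypothesis Q_det : Q \subset det_procs G.
Hypothesis Q_meets_nodes : forall n, n \in nodes G -> dom G n :&: Q != set0.

Local Notation GQ := (restrict G Q).
Implicit Types (C X Y : config P N) (f : N -> option R).

Lemma in_nodes_restrict n :
  (n \in nodes GQ) = (n \in nodes G) && (dom G n :&: Q != set0).
Proof. by rewrite inE. Qed.

Lemma edge_restrict : subrel (edge GQ) (edge G).
Proof.
move=> n x /andP[]; rewrite in_nodes_restrict => /andP[nG _].
case/exists_inP=> a aout /exists_inP[p /setIP[pn _] /setIP[xd _]].
exact: edge_delta nG aout pn xd.
Qed.

Lemma delta_restrict n a p : n \in nodes G -> a \in out G n ->
  p \in dom G n -> p \in Q -> delta GQ n a p = delta G n a p.
Proof.
case: wfG => _ [_ [_ [_ [_ [_ wf_delta]]]]] nG aout pn pQ.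
have [_ /subsetP sub_nodes succ_dom] := wf_delta n a p nG aout pn.
apply/setIidPl/subsetP => x xd; rewrite in_nodes_restrict sub_nodes //=.
by apply/set0Pn; exists p; rewrite inE succ_dom.
Qed.

Lemma delta_restrict_set1 n a p : n \in nodes G -> a \in out G n ->
  p \in dom G n -> p \in Q -> exists2 x, delta GQ n a p = [set x] & edge G n x.
Proof.
move=> nG aout pn pQ; rewrite delta_restrict //.
have := subsetP Q_det p pQ; rewrite inE => /andP[_ /forall_inP/(_ n nG)].
move=> /implyP/(_ pn)/forall_inP/(_ a aout)/cards1P[x dx].
by exists x => //; apply: edge_delta nG aout pn _; rewrite dx set11.
Qed.

Lemma Q_procs : {subset Q <= procs G}.
Proof. by move=> p /(subsetP Q_det); rewrite inE => /andP[]. Qed.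

Lemma enabled_fin n : enabled GQ (C_fin GQ) n -> n = nfin G.
Proof.
case/andP; rewrite in_nodes_restrict => /andP[_ /set0Pn[q qn]] /forall_inP/(_ q qn).
by case/setIP: qn => _ qQ; rewrite ffunE /= qQ => /set1P.
Qed.

Definition project C : config P N := [ffun p => if p \in Q then C p else set0].

Lemma project_init : project (C_init G) = C_init GQ.
Proof. by apply/ffunP => p; rewrite !ffunE /=; case: ifP => // /Q_procs ->. Qed.

Lemma project_fin : project (C_fin G) = C_fin GQ.
Proof. by apply/ffunP => p; rewrite !ffunE /=; case: ifP => // /Q_procs ->. Qed.

Lemma project_fire f C m c : enabled G C m -> f m = Some c -> c \in out G m ->
  step_by GQ f (project C) (project (fire G C m c)).
Proof.
move=> /andP[mG /forall_inP mC] fm cout; exists m, c; split => //.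
- rewrite /enabled in_nodes_restrict mG Q_meets_nodes //=.
  by apply/forall_inP => p /setIP[pm pQ]; rewrite ffunE pQ mC.
- apply/ffunP => p; rewrite !ffunE /= in_setI.
  case: (boolP (p \in Q)) => pQ; rewrite ?andbT ?andbF //; case: ifP => // pm.
  exact/esym/delta_restrict.
Qed.

Definition weight C := \sum_p \sum_(x in C p) height G x.

Lemma weight_step X Y : step GQ X Y -> weight Y < weight X.
Proof.
case=> n [a [/andP[nGQ /forall_inP nX] aout ->]].
move: (nGQ); rewrite in_nodes_restrict => /andP[nG /set0Pn[q0 q0n]].
have fire_lt p : p \in dom GQ n ->
    \sum_(x in delta GQ n a p) height G x < \sum_(x in X p) height G x.
  move=> pn; case/setIP: (pn) => pnG pQ.
  have [x -> nx] := delta_restrict_set1 nG aout pnG pQ.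
  rewrite big_set1 (bigD1 n (nX p pn)) /=.
  exact: leq_trans (height_edge acyclicG nx) (leq_addr _ _).
rewrite /weight (bigD1 q0) //= [X in _ < X](bigD1 q0) //= ffunE q0n -addSn.
rewrite leq_add ?fire_lt //; apply: leq_sum => p _; rewrite ffunE.
by case: ifP => // /fire_lt/ltnW.
Qed.

Definition Q_singleton C := forall q, q \in Q -> exists x, C q = [set x].

Lemma Q_singleton_init : Q_singleton (C_init GQ).
Proof. by move=> q qQ; exists (ninit G); rewrite ffunE /= qQ. Qed.

Lemma Q_singleton_step X Y : step GQ X Y -> Q_singleton X -> Q_singleton Y.
Proof.
case=> n [a [/andP[nGQ _] aout ->]] Xsingle q qQ; rewrite ffunE.
case: ifP => [/setIP[qn _] | _]; last exact: Xsingle.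
move: nGQ; rewrite in_nodes_restrict => /andP[nG _].
by have [x -> _] := delta_restrict_set1 nG aout qn qQ; exists x.
Qed.

Lemma enabled_disjoint X m n : Q_singleton X ->
  enabled GQ X m -> enabled GQ X n -> m != n -> [disjoint dom GQ m & dom GQ n].
Proof.
move=> Xsingle /andP[_ /forall_inP mX] /andP[_ /forall_inP nX] mn.
apply/pred0P => p /=; apply/negbTE/andP => -[pm pn].
have [x Xp] := Xsingle p (setIP pm).2.
by move: (mX p pm) (nX p pn) mn; rewrite Xp => /set1P-> /set1P->; rewrite eqxx.
Qed.

Definition total_strategy f :=
  forall m b, b \in out G m -> exists2 c, f m = Some c & c \in out G m.

Definition override f n a : N -> option R :=
  fun m => if m == n then Some a else f m.

Lemma total_override f n a :
  total_strategy f -> a \in out G n -> total_strategy (override f n a).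
Proof.
move=> ftot aout m b; rewrite /override.
by case: eqP => [-> | _]; [exists a | apply: ftot].
Qed.

Lemma total_pick : total_strategy (fun m => [pick b in out G m]).
Proof. by move=> m b bout; case: pickP => [c | /(_ b)]; [exists c | rewrite bout]. Qed.

Lemma reachable_project_finishes f C : total_strategy f ->
  reachable G (C_init G) C -> reachable_by GQ f (project C) (C_fin GQ).
Proof.
move=> ftot; have [k] := ubnP (weight (project C)); elim: k C => // k IH C.
move=> weight_lt Cr.
have [-> | [C' [m [b [mC bout _]]]]] := clos_rt_first_step (soundG Cr).
  by rewrite project_fin; apply: rt_refl.
have [c fm cout] := ftot m b bout.
have Cstep := project_fire mC fm cout.
apply: rt_trans (rt_step _ _ _ _ Cstep) (IH _ _ _).
- by rewrite -ltnS; apply: leq_trans weight_lt; apply/weight_step/step_by_step/Cstep.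
- by apply: rt_trans Cr (rt_step _ _ _ _ _); exists m, c.
Qed.

Lemma reachable_by_avoid f f' n q Y Z :
  (forall m, m != n -> f' m = f m) -> q \in dom GQ n -> reachable_by GQ f' Y Z ->
  (forall y, y \in Y q -> ~~ connect (edge G) y n) -> reachable_by GQ f Y Z.
Proof.
move=> ff' qn; elim/clos_refl_trans_ind_right => [|{}Y Y' YY' IH _] Y_avoids.
  exact: rt_refl.
have Ystep : step_by GQ f Y Y'.
  case: YY' => m [b [mY fm bout ->]]; exists m, b; split => //.
  have [mn | /ff' <- //] := eqVneq m n.
  move: mY => /andP[_ /forall_inP/(_ q)]; rewrite mn => /(_ qn) nY.
  by have := Y_avoids n nY; rewrite connect0.
apply: rt_trans (rt_step _ _ _ _ Ystep) (IH _) => y' y'Y'; apply/negP => y'n.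
have := descends_sub edge_restrict (step_descends (step_by_step YY')).
case/(_ q y' y'Y') => y yY yy'.
by have := Y_avoids y yY; rewrite (connect_trans yy' y'n).
Qed.

Lemma reachable_by_fire f n a X : a \in out G n ->
  reachable_by GQ (override f n a) X (C_fin GQ) -> Q_singleton X -> enabled GQ X n ->
  reachable_by GQ f (fire GQ X n a) (C_fin GQ).
Proof.
move=> aout; elim/clos_refl_trans_ind_right => [|{}X Y XY IH Yfin] Xsingle nX.
  by move: aout; rewrite (enabled_fin nX) (out_nfin acyclicG wfG soundG) inE.
case: XY IH Yfin => m [b [mX fm bout ->]] IH Yfin.
have [mn | mn] := eqVneq m n.
  move: fm Yfin; rewrite mn /override eqxx => -[<-] Yfin.
  have /andP[nGQ _] := nX.
  move: (nGQ); rewrite in_nodes_restrict => /andP[nG /set0Pn[q qn]].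
  apply: (reachable_by_avoid _ qn Yfin) => [m' /negbTE m'n | y].
    by rewrite /override m'n.
  rewrite ffunE qn => /setIP[yd _]; apply: acyclicG.
  by apply: edge_delta nG aout (setIP qn).1 yd.
have dis := enabled_disjoint Xsingle mX nX mn.
have Xstep : step_by GQ f (fire GQ X n a) (fire GQ (fire GQ X m b) n a).
  exists m, b; split => //; last exact: fire_comm.
  - by apply: enabled_fire mX; rewrite disjoint_sym.
  - by move: fm; rewrite /override (negbTE mn).
apply: rt_trans (rt_step _ _ _ _ Xstep) (IH _ _).
- by apply: Q_singleton_step Xsingle; exists m, b.
- exact: enabled_fire.
Qed.

Lemma reachable_restrict_finishes X : reachable GQ (C_init GQ) X ->
  Q_singleton X /\ forall f, total_strategy f -> reachable_by GQ f X (C_fin GQ).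
Proof.
elim/clos_refl_trans_ind_left => [|Y Z _ [Ysingle Yfin] YZ].
  split=> [|f ftot]; first exact: Q_singleton_init.
  by rewrite -project_init; apply: reachable_project_finishes ftot (rt_refl _ _ _).
split=> [|f ftot]; first exact: Q_singleton_step YZ Ysingle.
case: YZ => n [a [nY aout ->]].
exact: reachable_by_fire aout (Yfin _ (total_override ftot aout)) Ysingle nY.
Qed.

Theorem sound_restrict : sound GQ.
Proof.
move=> X /reachable_restrict_finishes[_ Xfin].
exact: reachable_by_reachable (Xfin _ total_pick).
Qed.

End DeterministicRestriction.

Theorem lemma4p9 (P N R : finType) (G : negotiation P N R) :
  wf_neg G -> sound G -> acyclic G -> weakly_nondet G ->
  sound (restrict_det G).
Proof.
move=> wfG soundG acyclicG wnd; apply: sound_restrict => // n /wnd[p pn pdet].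
by apply/set0Pn; exists p; rewrite !inE pn pdet.
Qed.
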